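(* Let $1\le k<n$. Every RYD in $\mathbb{Y}_{OG(k,2n+1)}$ is a $W^{OG(k,2n+1)}$-diagram, i.e. $\mathbb{Y}_{OG(k,2n+1)}\subseteq\Theta(k,2n+1)$.
   Context: Root system $B_n$: positive roots $e_a\pm e_b$ ($a<b$), $e_a$; simple roots $e_i-e_{i+1}$ ($i<n$), $e_n$; order $\alpha\le\beta$ iff $\beta-\alpha$ is a nonnegative integer combination of simple roots. $W^{OG(k,2n+1)}$ is the set of signed permutations $w=(y_1,\dots,y_{k-r},\overline{z_r},\dots,\overline{z_1},v_1,\dots,v_{n-k})$ of $1,\dots,n$ (bars = negative entries) with $0\le r\le k$, $y_1<\dots<y_{k-r}$, $z_r>\dots>z_1$, $v_1<\dots<v_{n-k}$, acting by $e_a\mapsto\pm e_{|w(a)|}$ (minus if barred); $\mathrm{Inv}(w)$ is the set of positive roots sent to negative roots, and $\mathbb{Y}_{OG(k,2n+1)}=\{\mathrm{Inv}(w)\}$. The base region is the set of roots $e_a\pm e_b$ ($a\le k<b$) and $e_a$ ($a\le k$); its $i$-th row ($1\le i\le k$) consists of $e_{k+1-i}\pm e_b$ ($b>k$) and $e_{k+1-i}$. The top region is the set of roots $e_a+e_b$ with $a<b\le k$. Both regions are subposets. A subset $S$ of the union of the two regions is a $W^{OG(k,2n+1)}$-diagram if $S$ meets each region in a lower order ideal of that region and satisfies the support condition: for each top-region root $e_a+e_b$ ($a<b\le k$), if $S$ contains more than $2n+1-2k$ roots of the base rows indexed by $a$ and $b$ (i.e. rows $k+1-a$ and $k+1-b$)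 combined, then $e_a+e_b\in S$, and if it contains fewer than $2n+1-2k$ such roots then $e_a+e_b\notin S$. $\Theta(k,2n+1)$ is the set of these diagrams. *)

From HB Require Import structures.
From mathcomp Require Import all_boot all_order all_algebra.
Unset Printing Implicit Defensive.
Import Order.TTheory GRing.Theory Num.Theory.
Local Open Scope ring_scope.

(* Vectors of R^n with integer coordinates; coordinate i : 'I_n is e_{i+1}. *)
Notation vec n := {ffun 'I_n -> int}.

Definition e (n a : nat) : vec n := [ffun i : 'I_n => ((i.+1 == a) : nat)%:Z].

Definition pos_roots (n : nat) : seq (vec n) :=
  [seq e n a - e n b | a <- iota 1 n, b <- iota a.+1 (n - a)] ++
  [seq e n a + e n b | a <- iota 1 n, b <- iota a.+1 (n - a)] ++
  [seq e n a | a <- iota 1 n].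

Definition simple_root (n i : nat) : vec n :=
  if (i < n)%N then e n i - e n i.+1 else e n n.

Definition root_le (n : nat) (al be : vec n) : Prop :=
  exists c : 'I_n -> nat, be - al = \sum_(i < n) simple_root n i.+1 *+ c i.

(* Signed permutations are sequences w = (w(1),...,w(n)) of nonzero integers,
   a negative entry being a barred one. *)
Definition signed_perm (n : nat) (w : seq int) : Prop :=
  size w = n /\ perm_eq (map absz w) (iota 1 n).

(* W^{OG(k,2n+1)}: w = (y_1..y_{k-r}, zbar_r..zbar_1, v_1..v_{n-k}). *)
Definition in_W_OG (n k : nat) (w : seq int) : Prop :=
  signed_perm n w /\
  exists r : nat, (r <= k)%N /\
    let y := take (k - r) w in
    let z := take r (drop (k - r) w) in
    let v := drop k w in
    [/\ all (fun x => 0 < x) y /\ sorted (fun x x' => x < x') y,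
        all (fun x => x < 0) z /\ sorted (fun x x' : int => (absz x' < absz x)%N) z &
        all (fun x => 0 < x) v /\ sorted (fun x x' => x < x') v].

Definition act (n : nat) (w : seq int) (al : vec n) : vec n :=
  \sum_(i < n) e n (absz (nth 0 w i)) *~ (al i * sgz (nth 0 w i)).

Definition Inv (n : nat) (w : seq int) (al : vec n) : bool :=
  (al \in pos_roots n) && (- act n w al \in pos_roots n).

Definition base_region (n k : nat) : seq (vec n) :=
  [seq e n a - e n b | a <- iota 1 k, b <- iota k.+1 (n - k)] ++
  [seq e n a + e n b | a <- iota 1 k, b <- iota k.+1 (n - k)] ++
  [seq e n a | a <- iota 1 k].

Definition base_row (n k i : nat) : seq (vec n) :=
  [seq e n (k.+1 - i) - e n b | b <- iota k.+1 (n - k)] ++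
  [seq e n (k.+1 - i) + e n b | b <- iota k.+1 (n - k)] ++
  [:: e n (k.+1 - i)].

Definition top_region (n k : nat) : seq (vec n) :=
  [seq e n a + e n b | a <- iota 1 k, b <- iota a.+1 (k - a)].

Definition lower_ideal_in (n : nat) (R : seq (vec n)) (S : vec n -> bool) : Prop :=
  forall al be, al \in R -> be \in R -> root_le n al be -> S be -> S al.

Definition W_OG_diagram (n k : nat) (S : vec n -> bool) : Prop :=
  [/\ (forall al, S al -> (al \in base_region n k) || (al \in top_region n k)),
      lower_ideal_in n (base_region n k) S,
      lower_ideal_in n (top_region n k) S &
      forall a b : nat, (1 <= a)%N -> (a < b)%N -> (b <= k)%N ->
        let c := (count S (base_row n k (k.+1 - a)) +
                  count S (base_row n k (k.+1 - b)))%N in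
        ((2 * n + 1 - 2 * k < c)%N -> S (e n a + e n b)) /\
        ((c < 2 * n + 1 - 2 * k)%N -> ~~ S (e n a + e n b))].

From mathcomp Require Import all_boot all_order all_algebra zify.
Set Implicit Arguments.
Unset Strict Implicit.
Unset Printing Implicit Defensive.
Import Order.TTheory GRing.Theory Num.Theory.
Local Open Scope ring_scope.

(* For a signed permutation w put t_i = <w e_i, rho> with rho = (n, n-1, ..., 1), i.e.
   t_i = +-(n+1-|w(i)|) with the sign of w(i).  A positive root alpha is an inversion of w
   iff <alpha, t> < 0.  For w in W^{OG(k,2n+1)} the sequence t decreases on 1..k and on
   k+1..n and is positive on k+1..n, so t pairs nonnegatively with every simple root except
   alpha_k.  Hence inversions lie in the two regions, and since all roots of one region have
   the same alpha_k-coefficient, comparable roots there differ by a nonnegative combination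
   of the other simple roots: Inv(w) is a lower ideal in each region.  For the support
   condition, row a contains #{b > k | t_b > t_a} inversions if t_a > 0 and
   n-k+1 + #{b > k | t_b < -t_a} if t_a < 0; comparing the sum of two rows with 2(n-k)+1
   decides the sign of t_a + t_b, i.e. whether e_a + e_b is an inversion. *)

Lemma count_cover (T : eqType) (p q : pred T) (s : seq T) :
  {in s, forall x, p x || q x} -> (size s <= count p s + count q s)%N.
Proof.
by move=> pq_s; rewrite -count_predUI (@eq_in_count _ _ predT) ?count_predT ?leq_addr.
Qed.

Lemma count_disjoint (T : eqType) (p q : pred T) (s : seq T) :
  {in s, forall x, ~~ (p x && q x)} -> (count p s + count q s <= size s)%N.
Proof.
move=> pq_s; rewrite -count_predUI (@eq_in_count _ (predI p q) pred0).
  by rewrite count_pred0 addn0 count_size.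
by move=> x /pq_s /negPf.
Qed.

Lemma sorted_slice (T : Type) (x0 : T) (lt : rel T) (P : pred T) (s b : seq T) lo :
  transitive lt -> all P b -> sorted lt b ->
  (forall i, (i < size b)%N -> nth x0 b i = nth x0 s (lo + i)) ->
  (forall i, (lo <= i < lo + size b)%N -> P (nth x0 s i)) /\
  (forall i j, (lo <= i)%N -> (i < j < lo + size b)%N -> lt (nth x0 s i) (nth x0 s j)).
Proof.
move=> lt_tr /(all_nthP x0) P_b sorted_b nth_b; split => [i hi | i j hi hij].
  rewrite (_ : i = lo + (i - lo))%N -?nth_b; try lia.
  by apply: P_b; lia.
rewrite (_ : i = lo + (i - lo))%N 1?(_ : j = lo + (j - lo))%N -?nth_b; try lia.
by apply: (sorted_ltn_nth lt_tr) => //; rewrite ?inE; lia.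
Qed.

Section RootsOfB.
Variable n : nat.
Implicit Types (a b : nat) (p q : int) (v : vec n) (u : nat -> int).

Lemma eE a (i : 'I_n) : e n a i = ((i.+1 == a) : nat)%:Z.
Proof. by rewrite ffunE. Qed.

(* The weights [u] are indexed from 1, like the basis vectors [e n a]. *)
Definition dot v u : int := \sum_(i < n) v i * u i.+1.

Lemma dot0 u : dot 0 u = 0.
Proof. by rewrite /dot big1 // => i _; rewrite ffunE mul0r. Qed.

Lemma dotD v1 v2 u : dot (v1 + v2) u = dot v1 u + dot v2 u.
Proof. by rewrite /dot -big_split; apply: eq_bigr => i _; rewrite ffunE mulrDl. Qed.

Lemma dotN v u : dot (- v) u = - dot v u.
Proof. by rewrite /dot -sumrN; apply: eq_bigr => i _; rewrite ffunE mulNr. Qed.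

Lemma dotMz v z u : dot (v *~ z) u = dot v u *~ z.
Proof. by rewrite /dot mulrz_suml; apply: eq_bigr => i _; rewrite ffunMzE mulrzAl. Qed.

Lemma dotMn v c u : dot (v *+ c) u = dot v u *+ c.
Proof. by elim: c => [|c IH]; rewrite ?dot0 // !mulrS dotD IH. Qed.

Lemma dot_sum (I : Type) (r : seq I) (P : pred I) (F : I -> vec n) u :
  dot (\sum_(j <- r | P j) F j) u = \sum_(j <- r | P j) dot (F j) u.
Proof. exact: (big_morph (dot^~ u) (fun v1 v2 => dotD v1 v2 u) (dot0 u)). Qed.

Lemma sum_e (M : zmodType) a (F : nat -> M) :
  (0 < a <= n)%N -> \sum_(i < n) F i.+1 *~ e n a i = F a.
Proof.
move=> ha; have ia : (a.-1 < n)%N by lia.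
rewrite (bigD1 (Ordinal ia)) //= big1 => [|i ne_ia]; rewrite eE.
  by rewrite prednK ?eqxx ?addr0 //; lia.
suff /negPf-> : i.+1 != a by [].
by apply: contra ne_ia => /eqP ia_eq; apply/eqP/val_inj => /=; lia.
Qed.

Lemma dot_e a u : (0 < a <= n)%N -> dot (e n a) u = u a.
Proof.
move=> ha; rewrite -(sum_e u ha); apply: eq_bigr => i _.
by rewrite -mulrzl intz.
Qed.

Definition height v := dot v (fun i => (n.+1 - i)%:Z).

Variant pos_root_spec : vec n -> Prop :=
  | PosRootSub a b of (0 < a)%N & (a < b <= n)%N : pos_root_spec (e n a - e n b)
  | PosRootAdd a b of (0 < a)%N & (a < b <= n)%N : pos_root_spec (e n a + e n b)
  | PosRootE a of (0 < a <= n)%N : pos_root_spec (e n a).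

Lemma pos_rootsP v : v \in pos_roots n -> pos_root_spec v.
Proof.
rewrite !mem_cat.
case/or3P=> [/allpairsPdep[a [b [+ + ->]]]|/allpairsPdep[a [b [+ + ->]]]|/mapP[a + ->]];
  rewrite ?mem_iota => *; constructor; lia.
Qed.

Lemma pos_roots_sub a b : (0 < a)%N -> (a < b <= n)%N -> e n a - e n b \in pos_roots n.
Proof.
move=> a_gt0 ab; rewrite mem_cat; apply/orP; left.
by apply/allpairsPdep; exists a, b; rewrite !mem_iota; split => //; lia.
Qed.

Lemma pos_roots_add a b : (0 < a)%N -> (a < b <= n)%N -> e n a + e n b \in pos_roots n.
Proof.
move=> a_gt0 ab; rewrite !mem_cat; apply/or3P; apply: Or32.
by apply/allpairsPdep; exists a, b; rewrite !mem_iota; split => //; lia.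
Qed.

Lemma pos_roots_e a : (0 < a <= n)%N -> e n a \in pos_roots n.
Proof.
move=> ha; rewrite !mem_cat; apply/or3P; apply: Or33.
by apply/mapP; exists a; rewrite // mem_iota; lia.
Qed.

Lemma height_gt0 v : v \in pos_roots n -> 0 < height v.
Proof. by case/pos_rootsP => *; rewrite /height ?dotD ?dotN !dot_e; lia. Qed.

Definition roots := [pred v | (v \in pos_roots n) || (- v \in pos_roots n)].

Lemma rootsN v : (- v \in roots) = (v \in roots).
Proof. by rewrite !inE opprK orbC. Qed.

Lemma pos_rootsE v : v \in roots -> (v \in pos_roots n) = (0 < height v).
Proof.
case/orP=> [v_pos | /height_gt0]; first by rewrite v_pos height_gt0.
rewrite /height dotN oppr_gt0 => v_neg.
by apply/idP/idP => [/height_gt0|]; rewrite /height; lia.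
Qed.

Definition signed_e p : vec n := e n (absz p) *~ sgz p.

Lemma signed_eN p : signed_e (- p) = - signed_e p.
Proof. by rewrite /signed_e abszN sgzN mulrNz. Qed.

Lemma signed_e_gt0 p : 0 < p -> signed_e p = e n (absz p).
Proof. by move=> p_gt0; rewrite /signed_e gtr0_sgz. Qed.

Lemma signed_e_lt0 p : p < 0 -> signed_e p = - e n (absz p).
Proof. by move=> p_lt0; rewrite /signed_e ltr0_sgz // mulrN1z. Qed.

Lemma height_signed_e_gt0 p : 0 < p -> (absz p <= n)%N -> height (signed_e p) = n.+1%:Z - p.
Proof. by move=> p_gt0 hp; rewrite signed_e_gt0 // /height dot_e; lia. Qed.

Lemma height_signed_e_lt0 p : p < 0 -> (absz p <= n)%N -> height (signed_e p) = - n.+1%:Z - p.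
Proof. by move=> p_lt0 hp; rewrite signed_e_lt0 // /height dotN dot_e; lia. Qed.

Lemma signed_e_roots p : (0 < absz p <= n)%N -> signed_e p \in roots.
Proof.
move=> hp; have [p_lt0|p_gt0|p0] := ltgtP p 0; last by rewrite p0 in hp.
  by rewrite -rootsN -signed_eN signed_e_gt0 ?oppr_gt0 // inE pos_roots_e ?abszN.
by rewrite signed_e_gt0 // inE pos_roots_e.
Qed.

Lemma pos_roots_e_add_signed_e a q : (0 < a)%N -> (a < absz q <= n)%N ->
  e n a + signed_e q \in pos_roots n.
Proof.
move=> a_gt0 hq; have [q_lt0|q_gt0|q0] := ltgtP q 0; last by rewrite q0 in hq.
  by rewrite signed_e_lt0 // pos_roots_sub.
by rewrite signed_e_gt0 // pos_roots_add.
Qed.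

Lemma signed_eD_roots p q : (0 < absz p <= n)%N -> (0 < absz q <= n)%N -> absz p != absz q ->
  signed_e p + signed_e q \in roots.
Proof.
wlog lt_pq : p q / (absz p < absz q)%N => [hwlog hp hq ne_pq|].
  case: (ltngtP (absz p) (absz q)) => [lt_pq|lt_qp|eq_pq]; first exact: hwlog.
    by rewrite addrC; apply: hwlog; rewrite // eq_sym.
  by rewrite eq_pq eqxx in ne_pq.
move=> hp hq _; have [p_lt0|p_gt0|p0] := ltgtP p 0; last by rewrite p0 in hp.
  rewrite -rootsN opprD -!signed_eN signed_e_gt0 ?oppr_gt0 // inE.
  by rewrite pos_roots_e_add_signed_e ?abszN //; lia.
by rewrite signed_e_gt0 // inE pos_roots_e_add_signed_e //; lia.
Qed.

Lemma act_signed_e w v : act n w v = \sum_(i < n) signed_e (nth 0 w i) *~ v i.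
Proof. by apply: eq_bigr => i _; rewrite mulrC mulrzA. Qed.

Lemma actD w v1 v2 : act n w (v1 + v2) = act n w v1 + act n w v2.
Proof. by rewrite !act_signed_e -big_split; apply: eq_bigr => i _; rewrite ffunE mulrzDr. Qed.

Lemma actN w v : act n w (- v) = - act n w v.
Proof. by rewrite !act_signed_e -sumrN; apply: eq_bigr => i _; rewrite ffunE mulrNz. Qed.

Lemma act_e w a : (0 < a <= n)%N -> act n w (e n a) = signed_e (nth 0 w a.-1).
Proof. by move=> ha; rewrite -(sum_e (fun j => signed_e (nth 0 w j.-1)) ha) act_signed_e. Qed.

Lemma dot_act w v u : dot (act n w v) u = dot v (fun i => dot (signed_e (nth 0 w i.-1)) u).
Proof.
rewrite act_signed_e dot_sum; apply: eq_bigr => i _.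
by rewrite dotMz -mulrzl intz.
Qed.

Definition psum m v := dot v (fun i => ((i <= m)%N : nat)%:Z).

Lemma psum_simple_root m j : (m < n)%N -> (0 < j <= n)%N ->
  psum m (simple_root n j) = ((j == m) : nat)%:Z.
Proof.
by move=> lt_mn hj; rewrite /psum /simple_root; case: ifP => ?; rewrite ?dotD ?dotN !dot_e; lia.
Qed.

(* [psum m] reads off the coefficient of the m-th simple root, which therefore vanishes in
   [v2 - v1]; all other simple roots pair nonnegatively with [u]. *)
Lemma root_le_dot m u v1 v2 : (m < n)%N ->
  (forall j, (0 < j <= n)%N -> j != m -> 0 <= dot (simple_root n j) u) ->
  psum m v1 = psum m v2 -> root_le n v1 v2 -> dot v1 u <= dot v2 u.
Proof.
move=> lt_mn u_ge0 eq_psum [c hc].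
have dot_diff u' : dot v2 u' - dot v1 u' = \sum_(j < n) dot (simple_root n j.+1) u' *+ c j.
  by rewrite -dotN -dotD hc dot_sum; apply: eq_bigr => j _; rewrite dotMn.
have c_m (j : 'I_n) : j.+1 = m -> c j = 0%N.
  move=> jm; have psum_ge0 (i : 'I_n) : 0 <= psum m (simple_root n i.+1) *+ c i.
    by apply: mulrn_wge0; rewrite psum_simple_root ?ltn_ord //; lia.
  have := dot_diff (fun i => ((i <= m)%N : nat)%:Z).
  rewrite -/(psum m v1) -/(psum m v2) eq_psum subrr.
  move=> /esym/(psumr_eq0P (fun i _ => psum_ge0 i))/(_ j isT).
  by rewrite psum_simple_root ?ltn_ord ?jm ?eqxx //; lia.
rewrite -subr_ge0 dot_diff; apply: sumr_ge0 => j _.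
have [/c_m -> // | ne_jm] := eqVneq j.+1 m.
by apply/mulrn_wge0/u_ge0; rewrite ?ltn_ord.
Qed.
End RootsOfB.
Arguments dot {n} v u.
Arguments height {n} v.
Arguments psum {n} m v.

Section SignedPermutations.
Variables (n : nat) (w : seq int).
Hypothesis w_perm : signed_perm n w.

Lemma signed_perm_abs i : (i < n)%N -> (0 < absz (nth 0%R w i) <= n)%N.
Proof.
case: w_perm => size_w perm_w lt_in.
have : absz (nth 0%R w i) \in iota 1 n.
  by rewrite -(perm_mem perm_w) map_f ?mem_nth ?size_w.
by rewrite mem_iota; lia.
Qed.

Lemma signed_perm_abs_inj i j : (i < n)%N -> (j < n)%N -> i != j ->
  absz (nth 0 w i) != absz (nth 0 w j).
Proof.
case: w_perm => size_w perm_w lt_in lt_jn ne_ij.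
have uniq_w : uniq (map absz w) by rewrite (perm_uniq perm_w) iota_uniq.
by rewrite -!(nth_map 0 0%N absz) ?size_w // nth_uniq ?size_map ?size_w.
Qed.

Lemma act_roots v : v \in pos_roots n -> act n w v \in roots n.
Proof.
have abs_w a : (0 < a <= n)%N -> (0 < absz (nth 0%R w a.-1) <= n)%N.
  by move=> ha; apply: signed_perm_abs; lia.
have abs_inj a b : (0 < a)%N -> (a < b <= n)%N -> absz (nth 0 w a.-1) != absz (nth 0 w b.-1).
  by move=> a_gt0 ab; apply: signed_perm_abs_inj; lia.
case/pos_rootsP => [a b a_gt0 ab|a b a_gt0 ab|a ha]; rewrite ?actD ?actN !act_e; try lia.
- by rewrite -signed_eN signed_eD_roots ?abszN ?abs_w ?abs_inj //; lia.
- by rewrite signed_eD_roots ?abs_w ?abs_inj //; lia.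
- exact/signed_e_roots/abs_w.
Qed.

Definition heights i := height (signed_e n (nth 0 w i.-1)).

(* Inv(w) = {alpha > 0 | <alpha, w^-1 rho> < 0}, and [heights] is w^-1 rho. *)
Lemma InvE v : Inv n w v = (v \in pos_roots n) && (dot v heights < 0).
Proof.
rewrite /Inv; have [v_pos|//] := boolP (v \in pos_roots n).
by rewrite pos_rootsE ?rootsN ?act_roots // /height dotN dot_act oppr_gt0.
Qed.
End SignedPermutations.

Record og_window (n k : nat) (t : nat -> int) : Prop := OGWindow {
  og_window_decr_left : forall i j, (0 < i)%N -> (i < j <= k)%N -> t j < t i;
  og_window_decr_right : forall i j, (k < i)%N -> (i < j <= n)%N -> t j < t i;
  og_window_gt0_right : forall i, (k < i <= n)%N -> 0 < t i;
  og_window_neq0_left : forall i, (0 < i <= k)%N -> t i != 0;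
  og_window_add_neq0_left : forall i j, (0 < i)%N -> (i < j <= k)%N -> t i + t j != 0 }.

Section WindowDiagram.
Variables (n k : nat) (t : nat -> int) (S : vec n -> bool).
Hypotheses (lt_kn : (k < n)%N) (t_win : og_window n k t).
Hypothesis S_heights : forall v, S v = (v \in pos_roots n) && (dot v t < 0).

Let t_decr_left := og_window_decr_left t_win.
Let t_decr_right := og_window_decr_right t_win.
Let t_gt0_right := og_window_gt0_right t_win.

Lemma base_region_sub a b : (0 < a <= k)%N -> (k < b <= n)%N -> e n a - e n b \in base_region n k.
Proof.
move=> ha hb; rewrite mem_cat; apply/orP; left.
by apply/allpairsPdep; exists a, b; rewrite !mem_iota; split => //; lia.
Qed.

Lemma base_region_add a b : (0 < a <= k)%N -> (k < b <= n)%N -> e n a + e n b \in base_region n k.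
Proof.
move=> ha hb; rewrite !mem_cat; apply/or3P; apply: Or32.
by apply/allpairsPdep; exists a, b; rewrite !mem_iota; split => //; lia.
Qed.

Lemma base_region_e a : (0 < a <= k)%N -> e n a \in base_region n k.
Proof.
move=> ha; rewrite !mem_cat; apply/or3P; apply: Or33.
by apply/mapP; exists a; rewrite // mem_iota; lia.
Qed.

Lemma top_region_add a b : (0 < a)%N -> (a < b <= k)%N -> e n a + e n b \in top_region n k.
Proof.
by move=> a_gt0 ab; apply/allpairsPdep; exists a, b; rewrite !mem_iota; split => //; lia.
Qed.

Lemma support_in_regions v : S v -> (v \in base_region n k) || (v \in top_region n k).
Proof.
rewrite S_heights => /andP[/pos_rootsP[a b a_gt0 ab|a b a_gt0 ab|a ha]].
- rewrite dotD dotN !dot_e; try lia; move=> lt_tab.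
  case: (leqP a k) => [le_ak|lt_ka]; last by have := t_decr_right lt_ka ab; lia.
  case: (leqP b k) => [le_bk|lt_kb]; last by rewrite base_region_sub //; lia.
  by have := @t_decr_left a b a_gt0; lia.
- rewrite dotD !dot_e; try lia; move=> t_ab_lt0.
  case: (leqP b k) => [le_bk|lt_kb]; first by rewrite top_region_add ?orbT //; lia.
  case: (leqP a k) => [le_ak|lt_ka]; first by rewrite base_region_add //; lia.
  by have := @t_gt0_right a; have := @t_gt0_right b; lia.
- rewrite dot_e // => t_a_lt0.
  case: (leqP a k) => [le_ak|lt_ka]; first by rewrite base_region_e //; lia.
  by have := @t_gt0_right a; lia.
Qed.

Lemma simple_root_dot_ge0 j : (0 < j <= n)%N -> j != k -> 0 <= dot (simple_root n j) t.
Proof.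
move=> hj ne_jk; rewrite /simple_root; case: ifP => lt_jn; rewrite ?dotD ?dotN !dot_e; try lia.
  by have := @t_decr_left j j.+1; have := @t_decr_right j j.+1; lia.
by have := @t_gt0_right n; lia.
Qed.

Lemma lower_ideal_level (R : seq (vec n)) (l : int) :
  {in R, forall v, (v \in pos_roots n) && (psum k v == l)} -> lower_ideal_in n R S.
Proof.
move=> hR al be /hR/andP[al_pos /eqP psum_al] /hR/andP[_ /eqP psum_be] le_al_be.
rewrite !S_heights al_pos => /andP[_]; apply: le_lt_trans.
by apply: (root_le_dot lt_kn simple_root_dot_ge0) => //; rewrite psum_al psum_be.
Qed.

Lemma base_region_level : {in base_region n k, forall v, (v \in pos_roots n) && (psum k v == 1)}.
Proof.
move=> v vR; rewrite !mem_cat in vR.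
case/or3P: vR => [/allpairsPdep[a [b [+ + ->]]]|/allpairsPdep[a [b [+ + ->]]]|/mapP[a + ->]];
  rewrite ?mem_iota => *;
  by rewrite ?pos_roots_sub ?pos_roots_add ?pos_roots_e /psum ?dotD ?dotN ?dot_e; lia.
Qed.

Lemma top_region_level : {in top_region n k, forall v, (v \in pos_roots n) && (psum k v == 2)}.
Proof.
move=> v /allpairsPdep[a [b [+ + ->]]]; rewrite !mem_iota => *.
by rewrite pos_roots_add /psum ?dotD ?dot_e; lia.
Qed.

Lemma count_base_row a : (0 < a <= k)%N ->
  count S (base_row n k (k.+1 - a)) =
  (count (fun b => t a < t b)%R (iota k.+1 (n - k)) +
   count (fun b => t a + t b < 0)%R (iota k.+1 (n - k)) + (t a < 0)%R)%N.
Proof.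
move=> ha; rewrite /base_row (_ : k.+1 - (k.+1 - a) = a)%N; last by lia.
rewrite !count_cat !count_map /= addn0 addnA; congr (_ + _ + _)%N.
- apply: eq_in_count => b; rewrite mem_iota => hb /=.
  by rewrite S_heights pos_roots_sub ?dotD ?dotN ?dot_e ?subr_lt0 //; lia.
- apply: eq_in_count => b; rewrite mem_iota => hb /=.
  by rewrite S_heights pos_roots_add ?dotD ?dot_e //; lia.
- by rewrite S_heights pos_roots_e ?dot_e //; lia.
Qed.

Lemma count_base_row_gt0 a : (0 < a <= k)%N -> 0 < t a ->
  count S (base_row n k (k.+1 - a)) = count (fun b => t a < t b) (iota k.+1 (n - k)).
Proof.
move=> ha ta_gt0; rewrite count_base_row // (@eq_in_count _ (fun b => t a + t b < 0) pred0).
  by rewrite count_pred0; lia.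
by move=> b; rewrite mem_iota => hb /=; have := @t_gt0_right b; lia.
Qed.

Lemma count_base_row_lt0 a : (0 < a <= k)%N -> t a < 0 ->
  count S (base_row n k (k.+1 - a)) =
  (n - k + count (fun b => t b < - t a) (iota k.+1 (n - k))).+1.
Proof.
move=> ha ta_lt0; rewrite count_base_row // (@eq_in_count _ (fun b => t a < t b) predT).
  rewrite count_predT size_iota ta_lt0 addn1.
  by congr (_ + _).+1; apply: eq_count => b /=; lia.
by move=> b; rewrite mem_iota => hb /=; have := @t_gt0_right b; lia.
Qed.

Lemma support_condition a b : (1 <= a)%N -> (a < b)%N -> (b <= k)%N ->
  let c := (count S (base_row n k (k.+1 - a)) + count S (base_row n k (k.+1 - b)))%N in
  ((2 * n + 1 - 2 * k < c)%N -> S (e n a + e n b)) /\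
  ((c < 2 * n + 1 - 2 * k)%N -> ~~ S (e n a + e n b)).
Proof.
move=> a_gt0 lt_ab le_bk /=; have ab : (a < b <= k)%N by rewrite lt_ab.
have [ha hb] : (0 < a <= k)%N /\ (0 < b <= k)%N by lia.
have t_ba := t_decr_left a_gt0 ab.
have ta_neq0 := og_window_neq0_left t_win ha.
have tb_neq0 := og_window_neq0_left t_win hb.
have tab_neq0 := og_window_add_neq0_left t_win a_gt0 ab.
set V := iota k.+1 (n - k); have sizeV : size V = (n - k)%N by rewrite size_iota.
rewrite S_heights pos_roots_add ?dotD ?dot_e //=; try lia.
have [ta_lt0|ta_gt0|] := ltgtP (t a) 0; last by lia.
  by rewrite !count_base_row_lt0 ?(lt_trans t_ba) //; split; lia.
have [tb_lt0|tb_gt0|] := ltgtP (t b) 0; last by lia.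
  rewrite count_base_row_gt0 // count_base_row_lt0 // -/V.
  have [ta_lt_ntb|ntb_lt_ta|] := ltgtP (t a) (- t b); last by lia.
    have : (size V <= count (fun j => t a < t j)%R V + count (fun j => t j < - t b)%R V)%N.
      by apply: count_cover => j _; lia.
    by split; lia.
  have : (count (fun j => t a < t j)%R V + count (fun j => t j < - t b)%R V <= size V)%N.
    by apply: count_disjoint => j _; lia.
  by split; lia.
rewrite !count_base_row_gt0 // -/V.
by have := count_size (fun j => t a < t j) V; have := count_size (fun j => t b < t j) V; split; lia.
Qed.

Lemma W_OG_diagram_window : W_OG_diagram n k S.
Proof.
split; first exact: support_in_regions; last exact: support_condition.
  exact: lower_ideal_level base_region_level.
exact: lower_ideal_level top_region_level.
Qed.
End WindowDiagram.

(* [x i] is w(i); Y, Z, V are the blocks y, zbar, v of the one-line notation of w. *)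
Section Blocks.
Variables (n k r : nat) (x t : nat -> int).
Hypotheses (le_rk : (r <= k)%N) (le_kn : (k <= n)%N).
Hypothesis t_def : forall i, t i = height (signed_e n (x i)).
Hypothesis x_abs : forall i, (0 < i <= n)%N -> (0 < absz (x i) <= n)%N.
Hypothesis x_abs_inj : forall i j, (0 < i)%N -> (i < j <= n)%N -> absz (x i) != absz (x j).
Hypothesis Y_gt0 : forall i, (0 < i <= k - r)%N -> 0 < x i.
Hypothesis Z_lt0 : forall i, (k - r < i <= k)%N -> x i < 0.
Hypothesis V_gt0 : forall i, (k < i <= n)%N -> 0 < x i.
Hypothesis x_incr : forall i j, (0 < i)%N -> (i < j <= n)%N ->
  [|| (j <= k - r)%N, (k - r < i)%N && (j <= k)%N | (k < i)%N] -> x i < x j.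

Let t_pos i : (0 < i <= n)%N -> 0 < x i -> t i = n.+1%:Z - x i.
Proof. by move=> /x_abs hi xi; rewrite t_def height_signed_e_gt0 //; lia. Qed.

Let t_neg i : (0 < i <= n)%N -> x i < 0 -> t i = - n.+1%:Z - x i.
Proof. by move=> /x_abs hi xi; rewrite t_def height_signed_e_lt0 //; lia. Qed.

Let t_abs i : (0 < i <= n)%N -> absz (t i) = (n.+1 - absz (x i))%N.
Proof.
move=> hi; have := x_abs hi.
by have [xi|xi|xi] := ltgtP (x i) 0; [rewrite t_neg | rewrite t_pos |]; lia.
Qed.

Lemma og_window_blocks : og_window n k t.
Proof.
split.
- move=> i j i_gt0 ij; have hin : (0 < i <= n)%N by lia.
  have hjn : (0 < j <= n)%N by lia.
  have := x_abs hin; have := x_abs hjn.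
  case: (leqP j (k - r)) => [jY|jZ].
    have xi : 0 < x i by apply: Y_gt0; lia.
    have xj : 0 < x j by apply: Y_gt0; lia.
    have xij : x i < x j by apply: x_incr; rewrite ?jY //; lia.
    by rewrite (t_pos hin xi) (t_pos hjn xj); lia.
  have xj : x j < 0 by apply: Z_lt0; lia.
  case: (leqP i (k - r)) => [iY|iZ].
    have xi : 0 < x i by apply: Y_gt0; lia.
    by rewrite (t_pos hin xi) (t_neg hjn xj); lia.
  have xi : x i < 0 by apply: Z_lt0; lia.
  have xij : x i < x j by apply: x_incr; rewrite ?iZ //=; lia.
  by rewrite (t_neg hin xi) (t_neg hjn xj); lia.
- move=> i j lt_ki ij; have hin : (0 < i <= n)%N by lia.
  have hjn : (0 < j <= n)%N by lia.
  have xi : 0 < x i by apply: V_gt0; lia.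
  have xj : 0 < x j by apply: V_gt0; lia.
  have xij : x i < x j by apply: x_incr; rewrite ?lt_ki ?orbT //; lia.
  by rewrite (t_pos hin xi) (t_pos hjn xj); lia.
- move=> i hi; have hin : (0 < i <= n)%N by lia.
  have xi : 0 < x i by apply: V_gt0.
  by have := x_abs hin; rewrite (t_pos hin xi); lia.
- move=> i hi; have hin : (0 < i <= n)%N by lia.
  by have := t_abs hin; have := x_abs hin; lia.
- move=> i j i_gt0 ij; have hin : (0 < i <= n)%N by lia.
  have hjn : (0 < j <= n)%N by lia.
  have ijn : (i < j <= n)%N by lia.
  apply/eqP => tij; have : absz (t i) = absz (t j) by rewrite (_ : t j = - t i) ?abszN //; lia.
  have := x_abs hin; have := x_abs hjn.
  by have := t_abs hin; have := t_abs hjn; have := x_abs_inj i_gt0 ijn; lia.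
Qed.
End Blocks.

Lemma in_W_OG_window n k w : (k <= n)%N -> in_W_OG n k w -> og_window n k (heights n w).
Proof.
move=> le_kn [w_perm [r [le_rk /= [[Y_pos Y_sorted] [Z_neg Z_sorted] [V_pos V_sorted]]]]].
have size_w : size w = n by case: w_perm.
have {}Z_sorted : sorted <%R (take r (drop (k - r) w)).
  by apply: (sub_in_sorted _ Z_neg Z_sorted) => p q p_lt0 q_lt0 /=; lia.
have nth_Y i : (i < size (take (k - r) w))%N -> nth 0 (take (k - r) w) i = nth 0 w (0 + i).
  by rewrite size_take_min => hi; rewrite nth_take //; lia.
have nth_Z i : (i < size (take r (drop (k - r) w)))%N ->
    nth 0 (take r (drop (k - r) w)) i = nth 0 w (k - r + i).
  by rewrite size_take_min size_drop => hi; rewrite nth_take ?nth_drop //; lia.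
have nth_V i : (i < size (drop k w))%N -> nth 0 (drop k w) i = nth 0 w (k + i).
  by rewrite nth_drop.
have [Y_sgn Y_incr] := sorted_slice lt_trans Y_pos Y_sorted nth_Y.
have [Z_sgn Z_incr] := sorted_slice lt_trans Z_neg Z_sorted nth_Z.
have [V_sgn V_incr] := sorted_slice lt_trans V_pos V_sorted nth_V.
rewrite !size_take_min ?size_drop size_w in Y_sgn Y_incr Z_sgn Z_incr V_sgn V_incr.
apply: (@og_window_blocks n k r (fun i => nth 0 w i.-1)) => //
  [i hi|i j i_gt0 ij|i hi|i hi|i hi|i j i_gt0 ij].
- by apply: (signed_perm_abs w_perm); lia.
- by apply: (signed_perm_abs_inj w_perm); lia.
- by apply: Y_sgn; lia.
- by apply: Z_sgn; lia.
- by apply: V_sgn; lia.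
- by case/or3P => [?|/andP[? ?]|?]; [apply: Y_incr | apply: Z_incr | apply: V_incr]; lia.
Qed.

Theorem lemma3p5 (n k : nat) (hk1 : (1 <= k)%N) (hkn : (k < n)%N) (w : seq int) :
  in_W_OG n k w -> W_OG_diagram n k (Inv n w).
Proof.
move=> w_OG; have w_perm : signed_perm n w by case: w_OG.
apply: (W_OG_diagram_window hkn (in_W_OG_window (ltnW hkn) w_OG)).
exact: InvE.
Qed.
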